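(* Let $p\geq5$, let $m_{-1}=0$, $m_0=1$, $m_{n+2}=(p-2)m_{n+1}-m_n$, and write $x=p-2$, $d=p-3$. Then every positive integer $n$ has exactly one representation $n=\sum_{i=0}^k a_i m_i$ with $k\ge 0$ and all $a_i\in\{1,\dots,p-2\}$ such that the word $a_k a_{k-1}\cdots a_0$ contains no factor of the form $x\,d^j\,x$ with $j\ge 0$ (i.e. a digit $p-2$, followed by $j$ digits $p-3$, followed by a digit $p-2$).
   Context: $p\ge5$ is a fixed integer; $m_n$ are the metallic numbers defined by the recurrence in the claim. Words are read with the most significant digit $a_k$ on the left. *)

From mathcomp Require Import all_boot all_order all_algebra.
Set Implicit Arguments. Unset Strict Implicit. Unset Printing Implicit Defensive.
Import Order.TTheory GRing.Theory Num.Theory.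
Local Open Scope ring_scope.

(* Metallic numbers: metallic p n = m_n, with m_{-1} = 0, m_0 = 1,
   m_{n+2} = (p-2) m_{n+1} - m_n.  Since m_{-1} = 0, m_1 = p - 2. *)
Fixpoint metallic (p : nat) (n : nat) {struct n} : int :=
  match n with
  | 0%N => 1
  | k.+1 =>
    match k with
    | 0%N => (p%:Z - 2)
    | j.+1 => (p%:Z - 2) * metallic p k - metallic p j
    end
  end.

Lemma metallic_rec p n :
  metallic p n.+2 = (p%:Z - 2) * metallic p n.+1 - metallic p n.
Proof. by []. Qed.

(* A digit list ds = [:: a_0; a_1; ...; a_k] (least significant first).
   The word a_k a_{k-1} ... a_0 is (rev ds). *)
Definition word (ds : seq nat) : seq nat := rev ds.

Definition repr_value (p : nat) (ds : seq nat) : int :=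
  \sum_(i < size ds) (nth 0%N ds i)%:Z * metallic p i.

Definition has_forbidden_factor (p : nat) (w : seq nat) : Prop :=
  exists (u v : seq nat) (j : nat),
    w = u ++ [:: (p - 2)%N] ++ nseq j (p - 3)%N ++ [:: (p - 2)%N] ++ v.

Definition admissible (p : nat) (ds : seq nat) : Prop :=
  (0 < size ds)%N /\
  (forall a, a \in ds -> (1 <= a <= p - 2)%N) /\
  ~ has_forbidden_factor p (word ds).

(* Read from the most significant digit, the words avoiding the factors x d^j x are
   those accepted by a two-state automaton: after an x, and as long as only d's
   follow, the largest allowed digit drops from x to d.  With S_k = m_0 + ... + m_(k-1),
   induction on k shows that the accepted words of length k take exactly the values
   in [S_k, S_(k+1)), each once (from the restricted state: those below
   S_(k+1) - m_(k-1)); the recurrence m_(k+1) = x m_k - m_(k-1) is what makes the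
   intervals of the possible tails fit together.  As each tail lies in a window of
   width m_k above S_k, the leading digit is the quotient by m_k, which gives
   uniqueness, while choosing it greedily gives existence. *)

From mathcomp Require Import all_boot all_order all_algebra.
From mathcomp Require Import zify.

Set Implicit Arguments.
Unset Strict Implicit.
Unset Printing Implicit Defensive.

Import Order.TTheory GRing.Theory Num.Theory.
Local Open Scope ring_scope.

Lemma divzMD_small (q r m : int) : 0 <= r < m -> ((q * m + r) %/ m)%Z = q.
Proof.
move=> /andP [r_ge0 r_lt]; have m_gt0 : 0 < m := le_lt_trans r_ge0 r_lt.
by rewrite divzMDl ?gt_eqF // divz_small ?addr0 // r_ge0 gtz0_abs.
Qed.

Lemma exists_floor_mul (m r : int) : 0 < m -> 0 <= r ->
  exists q : nat, q%:Z * m <= r < (q%:Z + 1) * m.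
Proof.
move=> m_gt0 r_ge0; exists `|(r %/ m)%Z|%N; rewrite gez0_abs ?divz_ge0 //.
have := divz_eq r m; have := modz_ge0 r (lt0r_neq0 m_gt0); have := ltz_pmod r m_gt0.
by rewrite mulrDl mul1r; lia.
Qed.

Section WordAutomaton.

Variable p : nat.

Local Notation x := (p - 2)%N.
Local Notation d := (p - 3)%N.

(* The flag [free] is false exactly when the word read so far ends with x d^j,
   so that a digit x would complete a forbidden factor. *)
Definition max_digit (free : bool) : nat := if free then x else d.

Lemma max_digit_le free : (max_digit free <= x)%N.
Proof. by case: free => /=; lia. Qed.

Fixpoint accepted (free : bool) (w : seq nat) : bool :=
  if w is a :: w' then (1 <= a <= max_digit free)%N && accepted (a != max_digit free) w'
  else true.

(* Then [x :: w] begins with a forbidden factor. *)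
Definition closes_forbidden (w : seq nat) : Prop := exists j v, w = nseq j d ++ x :: v.

Lemma forbidden_nil : ~ has_forbidden_factor p [::].
Proof. by case=> [[|? ?] [? [?]]]. Qed.

Lemma closes_forbidden_nil : ~ closes_forbidden [::].
Proof. by case=> [[|?] [?]]. Qed.

Lemma forbidden_cons a w : has_forbidden_factor p (a :: w) <->
  (a = x /\ closes_forbidden w) \/ has_forbidden_factor p w.
Proof.
split.
  case=> [[|c u] [v [j /= [-> E]]]]; first by left; split => //; exists j, v.
  by right; exists u, v, j.
case=> [[-> [j [v ->]]] | [u [v [j ->]]]]; first by exists [::], v, j.
by exists (a :: u), v, j.
Qed.

Lemma closes_forbidden_cons a w : closes_forbidden (a :: w) <->
  a = x \/ (a = d /\ closes_forbidden w).
Proof.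
split; first by case=> [[|j] [v /= [-> E]]]; [left | right; split => //; exists j, v].
by case=> [-> | [-> [j [v ->]]]]; [exists 0%N, w | exists j.+1, v].
Qed.

Lemma acceptedP free w : accepted free w <->
  [/\ {in w, forall a, (1 <= a <= x)%N}, ~ has_forbidden_factor p w
    & ~~ free -> ~ closes_forbidden w].
Proof.
elim: w free => [|a w IH] free /=.
  by split=> // _; split=> [//|/forbidden_nil|_ /closes_forbidden_nil].
split.
  move=> /andP [/andP [a_ge1 a_le] /IH [digits not_forb not_closes]]; split.
  - move=> b; rewrite inE => /predU1P [-> | /digits //].
    by rewrite a_ge1 (leq_trans a_le (max_digit_le free)).
  - case/forbidden_cons => [[a_x w_closes] | //]; apply: not_closes w_closes.
    by apply/negPn/eqP; apply/anti_leq; rewrite a_le a_x max_digit_le.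
  - move: a_le; case: free not_closes => //= not_closes a_le _.
    case/closes_forbidden_cons => [a_x | [a_d w_closes]]; first lia.
    by apply: not_closes w_closes; rewrite a_d eqxx.
move=> [digits not_forb not_closes].
have /andP [a_ge1 a_le] := digits a (mem_head a w).
apply/andP; split.
  rewrite a_ge1; case: free not_closes => //= not_closes.
  have a_ne_x : a <> x by move=> a_x; apply: not_closes => //; apply/closes_forbidden_cons; left.
  lia.
apply/IH; split.
- by move=> b w_b; apply: digits; rewrite inE w_b orbT.
- by move=> w_forb; apply: not_forb; apply/forbidden_cons; right.
- move=> /negPn /eqP a_top w_closes; case: free a_top not_forb not_closes => /= a_top.
    by move=> not_forb _; apply: not_forb; apply/forbidden_cons; left.
  by move=> _ not_closes; apply: not_closes => //; apply/closes_forbidden_cons; right.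
Qed.

Lemma admissibleP ds : admissible p ds <-> (0 < size ds)%N /\ accepted true (rev ds).
Proof.
rewrite /admissible /word; split.
  move=> [size_gt0 [digits not_forb]]; split=> //.
  by apply/acceptedP; split=> // a; rewrite mem_rev; apply: digits.
move=> [size_gt0 /acceptedP [digits not_forb _]]; split=> //; split=> // a.
by rewrite -mem_rev; apply: digits.
Qed.

End WordAutomaton.

Section MetallicValues.

Variable p : nat.
Hypothesis p_ge4 : (4 <= p)%N.

Local Notation x := (p - 2)%N.
Local Notation max_digit := (max_digit p).
Local Notation accepted := (accepted p).

Definition metallic_prev (n : nat) : int := if n is k.+1 then metallic p k else 0.

Definition metallic_sum (k : nat) : int := \sum_(i < k) metallic p i.

Lemma metallicS n : metallic p n.+1 = x%:Z * metallic p n - metallic_prev n.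
Proof.
have -> : x%:Z = p%:Z - 2 by lia.
by case: n => [|n] //=; rewrite mulr1 subr0.
Qed.

Lemma metallic_prev_le n : 0 <= metallic_prev n <= metallic p n.
Proof.
elim: n => [|n /andP [ge0 le]] //.
change (0 <= metallic p n <= metallic p n.+1); rewrite metallicS.
have x_ge2 : 2 <= x%:Z by lia.
apply/andP; split; nia.
Qed.

Lemma metallic_gt0 n : 0 < metallic p n.
Proof.
elim: n => [|n IH] //; have /andP [_] := metallic_prev_le n.+1.
exact: lt_le_trans.
Qed.

Lemma metallic_sum0 : metallic_sum 0 = 0.
Proof. exact: big_ord0. Qed.

Lemma metallic_sumS k : metallic_sum k.+1 = metallic_sum k + metallic p k.
Proof. by rewrite /metallic_sum big_ord_recr. Qed.

Lemma ltn_metallic_sum : {mono metallic_sum : i j / (i < j)%N >-> i < j}.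
Proof.
apply: leW_mono; apply: le_mono; apply: (homo_ltn lt_trans) => k.
by rewrite metallic_sumS ltrDl metallic_gt0.
Qed.

Lemma metallic_sum_window (n : nat) :
  exists k, metallic_sum k <= n%:Z < metallic_sum k.+1.
Proof.
elim: n => [|n [k /andP [lo hi]]]; first by exists 0%N; rewrite metallic_sumS metallic_sum0.
have hi' : metallic_sum k.+1 < metallic_sum k.+2 by rewrite ltn_metallic_sum.
case: (ltP n.+1%:Z (metallic_sum k.+1)) => hn; [exists k | exists k.+1]; lia.
Qed.

Fixpoint word_value (w : seq nat) : int :=
  if w is a :: w' then a%:Z * metallic p (size w') + word_value w' else 0.

Lemma repr_value_rev ds : repr_value p ds = word_value (rev ds).
Proof.
elim/last_ind: ds => [|ds a IH]; first by rewrite /repr_value big_ord0.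
rewrite rev_rcons /= size_rev -IH /repr_value size_rcons big_ord_recr /=.
rewrite nth_rcons ltnn eqxx addrC; congr (_ + _).
by apply: eq_bigr => i _; rewrite nth_rcons ltn_ord.
Qed.

Lemma max_digit_ge1 free : (1 <= max_digit free)%N.
Proof. by case: free => /=; lia. Qed.

Definition value_max (free : bool) (k : nat) : int :=
  metallic_sum k.+1 - 1 - (if free then 0 else metallic_prev k).

Lemma value_maxS free k :
  value_max free k.+1 = (max_digit free)%:Z * metallic p k + value_max false k.
Proof.
rewrite /value_max !metallic_sumS metallicS /=.
by case: free => /=; lia.
Qed.

Lemma value_max_true k : value_max true k = metallic_sum k + metallic p k - 1.
Proof. by rewrite /value_max metallic_sumS subr0. Qed.

Lemma word_value_window free w : accepted free w ->
  metallic_sum (size w) <= word_value w <= value_max free (size w).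
Proof.
elim: w free => [|a w IH] free /=.
  by rewrite /value_max metallic_sumS metallic_sum0; case: free.
move=> /andP [/andP [a_ge1 a_le] /IH /andP [lo hi]].
have m_gt0 := metallic_gt0 (size w); have /andP [_ prev_le] := metallic_prev_le (size w).
rewrite value_maxS metallic_sumS; apply/andP; split; first nia.
move: hi; rewrite /value_max metallic_sumS.
case: eqP => [-> | a_ne] /= hi; first lia.
have : a%:Z + 1 <= (max_digit free)%:Z by lia.
nia.
Qed.

Lemma word_value_bounds free w : accepted free w ->
  metallic_sum (size w) <= word_value w < metallic_sum (size w).+1.
Proof.
move=> /word_value_window /andP [lo hi]; rewrite lo /=.
have := metallic_prev_le (size w); move: hi; rewrite /value_max.
by case: free => /= hi /andP [ge0 le]; lia.
Qed.

Lemma accepted_size_eq free1 free2 w1 w2 : accepted free1 w1 -> accepted free2 w2 ->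
  word_value w1 = word_value w2 -> size w1 = size w2.
Proof.
move=> /word_value_bounds /andP [lo1 hi1] /word_value_bounds /andP [lo2 hi2] e.
have lt21 : metallic_sum (size w2) < metallic_sum (size w1).+1 by lia.
have lt12 : metallic_sum (size w1) < metallic_sum (size w2).+1 by lia.
rewrite ltn_metallic_sum ltnS in lt21; rewrite ltn_metallic_sum ltnS in lt12.
by apply/eqP; rewrite eqn_leq lt12 lt21.
Qed.

Lemma accepted_inj free1 free2 w1 w2 : accepted free1 w1 -> accepted free2 w2 ->
  word_value w1 = word_value w2 -> w1 = w2.
Proof.
move=> acc1 acc2 e; have := accepted_size_eq acc1 acc2 e.
elim: w1 w2 free1 free2 acc1 acc2 e => [|a w1 IH] [|b w2] //= free1 free2.
move=> /andP [_ acc1] /andP [_ acc2] e [sz]; rewrite -sz in e.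
have /andP [lo1 hi1] := word_value_bounds acc1.
have /andP [lo2 hi2] := word_value_bounds acc2.
rewrite -sz metallic_sumS in lo2 hi2; rewrite metallic_sumS in hi1.
set m := metallic p (size w1) in e hi1 hi2; set s := metallic_sum (size w1) in lo1 lo2 hi1 hi2.
(* both tails lie in the window [s, s + m), so the leading digits are quotients by m *)
have e' : a%:Z * m + (word_value w1 - s) = b%:Z * m + (word_value w2 - s).
  by rewrite !addrA e.
have ab : a = b.
  by have := congr1 (divz^~ m) e'; rewrite !divzMD_small => [[]| |]; lia.
by rewrite ab (IH _ _ _ acc1 acc2 _ sz) //; move: e; rewrite ab => /addrI.
Qed.

Lemma accepted_exists free k (N : int) : metallic_sum k <= N <= value_max free k ->
  exists w, [/\ size w = k, accepted free w & word_value w = N].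
Proof.
elim: k free N => [|k IH] free N.
  rewrite /value_max metallic_sumS metallic_sum0 => bounds.
  by exists [::]; split => //; case: free bounds => /=; lia.
rewrite value_maxS metallic_sumS => /andP [lo hi].
have m_gt0 := metallic_gt0 k; set m := metallic p k in lo hi m_gt0 *.
case: (leP (metallic_sum k + (max_digit free)%:Z * m) N) => [top_le | lt_top].
  have /IH [w [sw acc vw]] : metallic_sum k <= N - (max_digit free)%:Z * m <= value_max false k.
    by apply/andP; split; lia.
  exists (max_digit free :: w); split => /=; first by rewrite sw.
    by rewrite eqxx max_digit_ge1 leqnn.
  by rewrite sw vw addrC subrK.
have r_ge0 : 0 <= N - metallic_sum k by lia.
have [q /andP [q_lo q_hi]] := exists_floor_mul m_gt0 r_ge0.
have q_ge1 : (1 <= q)%N.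
  have : 1 * m < (q%:Z + 1) * m by lia.
  by rewrite ltr_pM2r //; lia.
have q_lt_top : (q < max_digit free)%N.
  have : q%:Z * m < (max_digit free)%:Z * m by lia.
  by rewrite ltr_pM2r //; lia.
have /IH [w [sw acc vw]] : metallic_sum k <= N - q%:Z * m <= value_max true k.
  by rewrite value_max_true; apply/andP; split; lia.
exists (q :: w); split => /=; first by rewrite sw.
  by rewrite q_ge1 ltnW //= ltn_eqF.
by rewrite sw vw addrC subrK.
Qed.

End MetallicValues.

Theorem corollary2 (p : nat) (hp : (5 <= p)%N) (n : nat) (hn : (0 < n)%N) :
  exists! ds : seq nat, admissible p ds /\ n%:Z = repr_value p ds.
Proof.
have p_ge4 : (4 <= p)%N := ltnW hp.
have [k /andP [lo hi]] := metallic_sum_window p_ge4 n.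
have [w [_ acc val_w]] : exists w, [/\ size w = k, accepted p true w & word_value p w = n].
  by apply: accepted_exists; rewrite // value_max_true -metallic_sumS lo; lia.
exists (rev w); split.
  split; last by rewrite repr_value_rev revK.
  apply/admissibleP; rewrite size_rev revK; split=> //.
  by case: w val_w {acc} => //= val_w; lia.
move=> ds [/admissibleP [_ acc'] val_ds].
by rewrite (accepted_inj p_ge4 acc acc') ?revK // val_w val_ds repr_value_rev.
Qed.
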